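(* There is an absolute constant $K$ such that for every integer $c \ge 0$ there is a deterministic finite automaton over the alphabet $\{0,1\}\times\{0,1\}$, reading its input most significant digit first, with at most $K\max(1,\log c)$ states (not counting a dead state), which accepts a word $x \times y$ (with $x,y$ valid Fibonacci representations of the same length) if and only if $[x] - c = [y]$.
   Context: Fibonacci numbers: $F_0=0$, $F_1=1$, $F_k=F_{k-1}+F_{k-2}$. For a binary word $x = x_1\cdots x_\ell$, $[x] = \sum_{j=1}^{\ell} x_j F_{\ell-j+2}$. A valid Fibonacci representation is a binary word with no factor $11$; leading zeros are allowed. For words $x,y$ of equal length, $x\times y$ denotes the word over $\{0,1\}^2$ whose first component is $x$ and second is $y$ (shorter representation padded with leading zeros). A dead state is not counted. *)

From Stdlib Require Import Reals List Arith ZArith.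
Import ListNotations.

Fixpoint fib (k : nat) : nat :=
  match k with
  | 0 => 0
  | S k' => match k' with
            | 0 => 1
            | S k'' => fib k' + fib k''
            end
  end.

Fixpoint fibval (x : list bool) : nat :=
  match x with
  | [] => 0
  | b :: x' => (if b then fib (length x' + 2) else 0) + fibval x'
  end.

(* valid Fibonacci representation: no factor 11 (leading zeros allowed) *)
Fixpoint valid_fib (x : list bool) : Prop :=
  match x with
  | true :: ((true :: _) as _) => False
  | _ :: x' => valid_fib x'
  | [] => True
  end.

(* A deterministic finite automaton over {0,1} x {0,1} with states 0..n-1
   and a partial transition function: an undefined transition (None) means
   going to the (implicit, uncounted) dead state. *)
Record DFA := mkDFA {
  nstates : nat;
  start : nat;
  delta : nat -> bool * bool -> option nat;
  accepting : nat -> bool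
}.

Definition wf_DFA (A : DFA) : Prop :=
  start A < nstates A /\
  forall q a q', q < nstates A -> delta A q a = Some q' -> q' < nstates A.

Fixpoint run (A : DFA) (q : nat) (w : list (bool * bool)) : option nat :=
  match w with
  | [] => Some q
  | a :: w' => match delta A q a with
               | Some q' => run A q' w'
               | None => None
               end
  end.

Definition accepts (A : DFA) (w : list (bool * bool)) : bool :=
  match run A (start A) w with
  | Some q => accepting A q
  | None => false
  end.

(* Track, while reading x × y from the most significant digit, the pair (P, Q)
   with [u 0^n] - [v 0^n] = P F(n+2) + Q F(n+1) for the prefixes u, v read so far.
   The pair evolves by (P, Q) -> (P + Q + a - b, P), a map contracting the
   quantity P - φQ by the factor 1 - φ, so every reachable pair stays within
   distance 3 of the line P = φQ.  If the word is to be accepted with n digits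
   still unread, then P F(n+2) + Q F(n+1) is within F(n+2) of c, which pins Q
   to within 5/2 of c / (φ F(n+2) + F(n+1)).  For n >= 2 log2 c + 2 this
   quotient is below 1, so all useful pairs lie in O(log c) windows of bounded
   size, and restricting the transition system to them gives the automaton. *)
From Stdlib Require Import Reals List Arith ZArith Lra Lia.
Import ListNotations.
Open Scope R_scope.

Section ListDFA.

Context {T : Type}.
Variable (eq_dec : forall s t : T, {s = t} + {s <> t}).
Variables (states : list T) (step : T -> bool * bool -> T) (final : T -> bool) (s0 : T).

Fixpoint index_of (s : T) (l : list T) : nat :=
  match l with
  | [] => 0
  | t :: l' => if eq_dec t s then 0 else S (index_of s l')
  end.

Lemma index_of_lt s l : In s l -> (index_of s l < length l)%nat.
Proof.
  induction l as [|t l IH]; simpl; [tauto|].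
  intros Hs; destruct (eq_dec t s); [lia|].
  destruct Hs as [->|Hs]; [contradiction|specialize (IH Hs); lia].
Qed.

Lemma nth_index_of s l d : (index_of s l < length l)%nat -> nth (index_of s l) l d = s.
Proof.
  induction l as [|t l IH]; simpl; [lia|].
  destruct (eq_dec t s) as [->|_]; [reflexivity|].
  intros; apply IH; lia.
Qed.

Definition list_DFA : DFA :=
  mkDFA (length states) (index_of s0 states)
    (fun q a => let i := index_of (step (nth q states s0) a) states in
                if (i <? length states)%nat then Some i else None)
    (fun q => final (nth q states s0)).

Fixpoint path_within (s : T) (w : list (bool * bool)) : Prop :=
  match w with
  | [] => True
  | a :: w' => In (step s a) states /\ path_within (step s a) w'
  end.

Lemma run_list_DFA_Some w : forall q q', run list_DFA q w = Some q' ->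
  path_within (nth q states s0) w /\ nth q' states s0 = fold_left step w (nth q states s0).
Proof.
  induction w as [|a w IH]; simpl; intros q q' Hrun.
  - injection Hrun as <-; auto.
  - destruct (_ <? _)%nat eqn:Hlt; [|discriminate].
    apply Nat.ltb_lt in Hlt.
    rewrite <- (nth_index_of _ _ s0 Hlt).
    split; [split; [apply nth_In|]|]; apply IH in Hrun; tauto.
Qed.

Lemma run_list_DFA_path w : forall q, path_within (nth q states s0) w ->
  exists q', run list_DFA q w = Some q'.
Proof.
  induction w as [|a w IH]; simpl; intros q Hpath; [eauto|].
  destruct Hpath as [Hin Hpath].
  pose proof (index_of_lt _ _ Hin) as Hlt.
  apply Nat.ltb_lt in Hlt as Hltb; rewrite Hltb.
  apply IH; rewrite nth_index_of; auto.
Qed.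

Hypothesis s0_in : In s0 states.

Lemma list_DFA_wf : wf_DFA list_DFA.
Proof.
  split; [exact (index_of_lt _ _ s0_in)|].
  simpl; intros q a q' _ Hq'.
  destruct (_ <? _)%nat eqn:Hlt; [|discriminate].
  injection Hq' as <-; apply Nat.ltb_lt, Hlt.
Qed.

Lemma accepts_list_DFA w :
  accepts list_DFA w = true <-> path_within s0 w /\ final (fold_left step w s0) = true.
Proof.
  pose proof (nth_index_of s0 states s0 (index_of_lt _ _ s0_in)) as Hstart.
  unfold accepts; split.
  - destruct (run _ _ _) as [q|] eqn:Hrun; [|discriminate].
    apply run_list_DFA_Some in Hrun; simpl in Hrun; rewrite Hstart in Hrun.
    simpl; destruct Hrun as [Hpath ->]; auto.
  - intros [Hpath Hfin]. rewrite <- Hstart in Hpath.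
    destruct (run_list_DFA_path _ _ Hpath) as [q Hrun]; simpl in Hrun |- *.
    rewrite Hrun; apply run_list_DFA_Some in Hrun; rewrite Hstart in Hrun.
    destruct Hrun as [_ ->]; exact Hfin.
Qed.

End ListDFA.

Lemma fib_SS n : fib (S (S n)) = (fib (S n) + fib n)%nat.
Proof. reflexivity. Qed.

Lemma fib_le_S n : (fib n <= fib (S n))%nat.
Proof. destruct n; [simpl; lia|]. rewrite fib_SS; lia. Qed.

Lemma fib_mono n m : (n <= m)%nat -> (fib n <= fib m)%nat.
Proof. induction 1; [lia|]. pose proof (fib_le_S m); lia. Qed.

Lemma fib_S_pos n : (1 <= fib (S n))%nat.
Proof. induction n; [simpl; lia|]. rewrite fib_SS; lia. Qed.

Lemma pow2_le_fib k : (2 ^ k <= fib (S (S (2 * k))))%nat.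
Proof.
  induction k; [simpl; lia|].
  replace (2 * S k)%nat with (S (S (2 * k))) by lia.
  rewrite fib_SS, Nat.pow_succ_r'. pose proof (fib_le_S (S (S (2 * k)))); lia.
Qed.

Lemma valid_fib_cons a x : valid_fib (a :: x) -> valid_fib x.
Proof. destruct a, x as [|[] x]; simpl; tauto. Qed.

Lemma fibval_lt_fib x : valid_fib x -> (fibval x < fib (S (S (length x))))%nat.
Proof.
  remember (length x) as n eqn:Hn; revert x Hn.
  induction n as [n IH] using lt_wf_ind; intros [|a x] Hn Hvalid; [subst; simpl; lia|].
  cbn [fibval length] in *; subst n.
  replace (length x + 2)%nat with (S (S (length x))) by lia.
  destruct a.
  - destruct x as [|[] x]; [simpl; lia|simpl in Hvalid; tauto|].
    cbn [fibval length] in *.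
    pose proof (IH (length x) ltac:(lia) x eq_refl Hvalid).
    rewrite !fib_SS in *; lia.
  - pose proof (IH (length x) ltac:(lia) x eq_refl (valid_fib_cons _ _ Hvalid)).
    rewrite (fib_SS (S (length x))); lia.
Qed.

Definition fib_step (s : Z * Z) (ab : bool * bool) : Z * Z :=
  (fst s + snd s + Z.b2z (fst ab) - Z.b2z (snd ab), fst s)%Z.

Lemma fold_fib_step_combine x y s : length x = length y ->
  (fst (fold_left fib_step (combine x y) s) + snd (fold_left fib_step (combine x y) s) =
   fst s * Z.of_nat (fib (S (S (length x)))) + snd s * Z.of_nat (fib (S (length x)))
   + Z.of_nat (fibval x) - Z.of_nat (fibval y))%Z.
Proof.
  revert y s; induction x as [|a x IH]; intros [|b y] s Hlen;
    cbn [length combine fold_left fibval] in *; try discriminate.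
  - simpl; lia.
  - injection Hlen as Hlen. rewrite IH, <- Hlen by exact Hlen.
    replace (length x + 2)%nat with (S (S (length x))) by lia.
    rewrite (fib_SS (S (length x))), (fib_SS (length x)).
    unfold fib_step; destruct a, b; simpl; lia.
Qed.

Definition phi : R := (1 + sqrt 5) / 2.

Lemma phi_bounds : 1.6 <= phi <= 1.62.
Proof.
  assert (sqrt 5 * sqrt 5 = 5) by (apply sqrt_sqrt; lra).
  pose proof (sqrt_pos 5). unfold phi; split; nra.
Qed.

Lemma phi_sq : phi * phi = phi + 1.
Proof.
  assert (sqrt 5 * sqrt 5 = 5) by (apply sqrt_sqrt; lra).
  unfold phi; nra.
Qed.

Definition near_golden_line (s : Z * Z) : Prop :=
  -3 <= IZR (fst s) - phi * IZR (snd s) <= 3.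

Lemma near_golden_line_origin : near_golden_line (0%Z, 0%Z).
Proof. unfold near_golden_line; simpl; lra. Qed.

Lemma near_golden_line_step s a : near_golden_line s -> near_golden_line (fib_step s a).
Proof.
  unfold near_golden_line, fib_step; cbn [fst snd]; intros He.
  pose proof phi_bounds.
  assert (Hcontract : IZR (fst s) + IZR (snd s) - phi * IZR (fst s) =
                      (1 - phi) * (IZR (fst s) - phi * IZR (snd s))).
  { replace ((1 - phi) * (IZR (fst s) - phi * IZR (snd s)))
      with (IZR (fst s) - phi * IZR (fst s) + (phi * phi - phi) * IZR (snd s)) by ring.
    rewrite phi_sq; ring. }
  rewrite !minus_IZR, !plus_IZR.
  destruct a as [[] []]; simpl; nra.
Qed.

Definition Zrange (a : Z) (n : nat) : list Z := map (fun i => a + Z.of_nat i)%Z (seq 0 n).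

Lemma in_Zrange a n k : (a <= k < a + Z.of_nat n)%Z -> In k (Zrange a n).
Proof.
  intros Hk; apply in_map_iff; exists (Z.to_nat (k - a)).
  split; [lia|apply in_seq; lia].
Qed.

Definition window (z : Z) : list (Z * Z) :=
  map (fun '(Q, j) => (Int_part (phi * IZR Q) + j, Q)%Z)
      (list_prod (Zrange (z - 2) 6) (Zrange (-3) 7)).

Lemma length_window z : length (window z) = 42%nat.
Proof. unfold window, Zrange; rewrite length_map, length_prod, !length_map, !length_seq; reflexivity. Qed.

Lemma in_window z P Q : IZR z - 5/2 < IZR Q < IZR z + 7/2 ->
  near_golden_line (P, Q) -> In (P, Q) (window z).
Proof.
  unfold near_golden_line; cbn [fst snd]; intros [HQ1 HQ2] [HP1 HP2].
  destruct (base_Int_part (phi * IZR Q)) as [Hfl1 Hfl2].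
  set (fl := Int_part (phi * IZR Q)) in *.
  apply in_map_iff; exists (Q, (P - fl)%Z); split; [f_equal; lia|].
  apply in_prod; apply in_Zrange.
  - assert (z - 3 < Q)%Z by (apply lt_IZR; rewrite minus_IZR; lra).
    assert (Q < z + 4)%Z by (apply lt_IZR; rewrite plus_IZR; lra).
    lia.
  - assert (-4 < P - fl)%Z by (apply lt_IZR; rewrite minus_IZR; lra).
    assert (P - fl < 4)%Z by (apply lt_IZR; rewrite minus_IZR; lra).
    lia.
Qed.

Definition golden_weight (m : nat) : R := phi * INR (fib (S (S m))) + INR (fib (S m)).

Definition level_count (c : nat) : nat := 2 * (Nat.log2 c + 1).

Definition candidate_states (c : nat) : list (Z * Z) :=
  flat_map (fun m => window (Int_part (INR c / golden_weight m))) (seq 0 (level_count c))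
  ++ window 0.

Lemma length_candidate_states c : length (candidate_states c) = ((level_count c + 1) * 42)%nat.
Proof.
  unfold candidate_states; rewrite length_app, (flat_map_constant_length (c := 42%nat)), length_seq,
    length_window by (intros; apply length_window).
  lia.
Qed.

Lemma quotient_bounds P Q u v c : 0 <= v -> -3 <= P - phi * Q <= 3 ->
  -u < P * u + Q * v - c < u -> -(5/2) < Q - c / (phi * u + v) < 5/2.
Proof.
  intros Hv [He1 He2] [Hc1 Hc2].
  pose proof phi_bounds as [Hphi _].
  assert (Hu : 0 < u) by lra.
  set (G := phi * u + v).
  assert (HG : 1.6 * u <= G) by (unfold G; nra).
  assert (HGpos : 0 < G) by lra.
  assert (Hdiv : (Q - c / G) * G = (P * u + Q * v - c) - (P - phi * Q) * u).
  { transitivity (Q * G - c); [field; lra|unfold G; ring]. }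
  assert (-(5/2) * G < (Q - c / G) * G < 5/2 * G) by (rewrite Hdiv; nra).
  split; apply (Rmult_lt_reg_r G); lra.
Qed.

Lemma lt_fib_level c m : (level_count c <= m)%nat -> (c < fib (S (S m)))%nat.
Proof.
  unfold level_count; intros Hm.
  pose proof (pow2_le_fib (Nat.log2 c + 1)).
  pose proof (fib_mono _ _ (le_n_S _ _ (le_n_S _ _ Hm))).
  destruct c as [|c]; [pose proof (fib_S_pos (S m)); lia|].
  pose proof (Nat.log2_spec (S c) ltac:(lia)) as [_ Hlog].
  rewrite Nat.add_1_r in *; lia.
Qed.

Lemma in_candidate_states c m P Q : near_golden_line (P, Q) ->
  (- Z.of_nat (fib (S (S m))) <
   P * Z.of_nat (fib (S (S m))) + Q * Z.of_nat (fib (S m)) - Z.of_nat c <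
   Z.of_nat (fib (S (S m))))%Z ->
  In (P, Q) (candidate_states c).
Proof.
  intros Hnear [Hlo Hhi].
  apply IZR_lt in Hlo, Hhi.
  rewrite opp_IZR in Hlo.
  rewrite minus_IZR, plus_IZR, !mult_IZR, <- !INR_IZR_INZ in Hlo, Hhi.
  pose proof (quotient_bounds _ _ _ _ _ (pos_INR (fib (S m))) Hnear (conj Hlo Hhi))
    as [HQ1 HQ2].
  cbn [snd] in HQ1, HQ2; fold (golden_weight m) in HQ1, HQ2.
  set (x := INR c / golden_weight m) in *.
  pose proof phi_bounds.
  assert (HF : 1 <= INR (fib (S (S m)))) by (apply (le_INR 1), fib_S_pos).
  assert (HG : INR (fib (S (S m))) <= golden_weight m)
    by (unfold golden_weight; pose proof (pos_INR (fib (S m))); nra).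
  unfold candidate_states; apply in_or_app.
  destruct (Nat.lt_ge_cases m (level_count c)) as [Hm|Hm].
  - left; apply in_flat_map; exists m; split; [apply in_seq; lia|].
    fold x; destruct (base_Int_part x); apply in_window; [split; lra|exact Hnear].
  - right; apply in_window; [|exact Hnear].
    assert (Hx : x * golden_weight m = INR c) by (unfold x; field; lra).
    pose proof (pos_INR c); pose proof (lt_INR _ _ (lt_fib_level c m Hm)).
    assert (0 <= x < 1) by (split; nra).
    simpl; split; lra.
Qed.

Lemma path_within_candidate_states c x y s : length x = length y -> valid_fib x -> valid_fib y ->
  near_golden_line s ->
  (fst (fold_left fib_step (combine x y) s) + snd (fold_left fib_step (combine x y) s)
   = Z.of_nat c)%Z ->
  path_within (candidate_states c) fib_step s (combine x y).
Proof.
  revert y s; induction x as [|a x IH]; intros [|b y] s Hlen Hx Hy Hnear Hfinal;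
    cbn [combine fold_left length path_within] in *; try discriminate; [exact I|].
  injection Hlen as Hlen.
  pose proof (near_golden_line_step s (a, b) Hnear) as Hnear'.
  apply valid_fib_cons in Hx, Hy.
  split; [|exact (IH y _ Hlen Hx Hy Hnear' Hfinal)].
  rewrite fold_fib_step_combine in Hfinal by exact Hlen.
  pose proof (fibval_lt_fib x Hx); pose proof (fibval_lt_fib y Hy).
  rewrite <- Hlen in *.
  destruct (fib_step s (a, b)) as [P Q]; cbn [fst snd] in Hfinal.
  apply (in_candidate_states c (length x)); [exact Hnear'|lia].
Qed.

Lemma log2_mul_ln2_le_ln c : (1 <= c)%nat -> INR (Nat.log2 c) * ln 2 <= ln (INR c).
Proof.
  intros Hc.
  pose proof (Nat.log2_spec c Hc) as [Hpow _].
  apply le_INR in Hpow; rewrite pow_INR in Hpow; change (INR 2) with 2 in Hpow.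
  rewrite <- ln_pow by lra.
  destruct (Rle_lt_or_eq_dec _ _ Hpow) as [Hlt | ->]; [|lra].
  left; apply ln_increasing; [apply pow_lt; lra|exact Hlt].
Qed.

Lemma length_candidate_states_le c :
  INR (length (candidate_states c)) <= 300 * Rmax 1 (ln (INR c)).
Proof.
  replace (INR (length (candidate_states c))) with (84 * INR (Nat.log2 c) + 126)
    by (rewrite length_candidate_states; unfold level_count;
        replace ((2 * (Nat.log2 c + 1) + 1) * 42)%nat with (84 * Nat.log2 c + 126)%nat by lia;
        rewrite plus_INR, mult_INR, !INR_IZR_INZ; reflexivity).
  pose proof (Rmax_l 1 (ln (INR c))); pose proof (Rmax_r 1 (ln (INR c))).
  destruct (Nat.eq_dec c 0) as [-> | Hc]; [change (INR (Nat.log2 0)) with 0; lra|].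
  pose proof (log2_mul_ln2_le_ln c ltac:(lia)); pose proof ln_lt_2.
  pose proof (pos_INR (Nat.log2 c)).
  nra.
Qed.

Definition Z2_eq_dec (s t : Z * Z) : {s = t} + {s <> t}.
Proof. decide equality; apply Z.eq_dec. Defined.

Definition fib_diff_DFA (c : nat) : DFA :=
  list_DFA Z2_eq_dec (candidate_states c) fib_step
    (fun s => (fst s + snd s =? Z.of_nat c)%Z) (0%Z, 0%Z).

Lemma origin_in_candidate_states c : In (0%Z, 0%Z) (candidate_states c).
Proof.
  apply in_or_app; right; apply in_window; [simpl; lra|exact near_golden_line_origin].
Qed.

Theorem theorem6 :
  exists K : R, forall c : nat,
    exists A : DFA,
      wf_DFA A /\
      (INR (nstates A) <= K * Rmax 1 (ln (INR c)))%R /\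
      forall x y : list bool,
        length x = length y -> valid_fib x -> valid_fib y ->
        (accepts A (combine x y) = true <->
         (Z.of_nat (fibval x) - Z.of_nat c = Z.of_nat (fibval y))%Z).
Proof.
  exists 300; intros c; exists (fib_diff_DFA c).
  pose proof (origin_in_candidate_states c) as Horigin.
  split; [exact (list_DFA_wf _ _ _ _ _ Horigin)|].
  split; [exact (length_candidate_states_le c)|].
  intros x y Hlen Hx Hy.
  pose proof (fold_fib_step_combine x y (0%Z, 0%Z) Hlen) as Hval; cbn [fst snd] in Hval.
  unfold fib_diff_DFA; rewrite accepts_list_DFA, Z.eqb_eq by exact Horigin.
  split; [intros [_ Hfinal]; lia|intros Hdiff; split; [|lia]].
  apply path_within_candidate_states; auto using near_golden_line_origin; lia.
Qed.
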